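(* Let $n\ge2$, $\nu\in I^n$ with $\nu_a=\nu_{a+1}$ for some $1\le a<n$, let $M$ be an $R(n)$-module and $f\in\mathbf k[x_1,\dots,x_n]$. If $f\,e(\nu)M=0$, then $$(\partial_af)\,\mathcal P_{\nu_a}(x_a,x_{a+1})\mathcal P_{\nu_a}(x_{a+1},x_a)\,e(\nu)M=0\quad\text{and}\quad(s_af)\,\mathcal P_{\nu_a}(x_a,x_{a+1})\mathcal P_{\nu_a}(x_{a+1},x_a)\,e(\nu)M=0,$$ where $s_af$ is $f$ with $x_a,x_{a+1}$ interchanged and $\partial_af=(s_af-f)/(x_a-x_{a+1})$.
   Context: Let $I$ be a finite set and $\mathtt A=(a_{ij})_{i,j\in I}$ an integer matrix with $a_{ii}=2$ or $a_{ii}\in 2\mathbb Z_{\le 0}$, $a_{ij}\le 0$ for $i\neq j$, and $a_{ij}=0\iff a_{ji}=0$. Assume there are $d_i\in\mathbb Z_{>0}$ with $(d_ia_{ij})$ symmetric, and fix simple roots $\alpha_i$ with symmetric form $(\alpha_i|\alpha_j)=d_ia_{ij}$. Let $\mathbf k=\bigoplus_{n\ge0}\mathbf k_n$ be a graded commutative ring, $\mathcal Q_{i,j}(u,v)\in\mathbf k[u,v]$ with $\mathcal Q_{i,j}(u,v)=\mathcal Q_{j,i}(v,u)$, $\mathcal Q_{i,i}=0$, and for $i\ne j$, $\mathcal Q_{i,j}=\sum_{d_ip+d_jq\le-(\alpha_i|\alpha_j)}t^{p,q}_{i,j}u^pv^q$ with $t^{-a_{ij},0}_{i,j}\in\mathbf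 k_0^\times$, $t^{p,q}_{i,j}\in\mathbf k_{-2((\alpha_i|\alpha_j)+d_ip+d_jq)}$, $t^{p,q}_{i,j}=t^{q,p}_{j,i}$; $\mathcal P_i(u,v)=\sum_{p+q\le1-a_{ii}/2}w_i^{p,q}u^pv^q$ with $w_i^{1-a_{ii}/2,0},w_i^{0,1-a_{ii}/2}\in\mathbf k_0^\times$, $w_i^{p,q}\in\mathbf k_{2d_i(1-p-q-a_{ii}/2)}$. $R(n)$ is the $\mathbf k$-algebra generated by $e(\nu)$ ($\nu\in I^n$), $x_k$, $\tau_\ell$ with relations: $e(\nu)e(\nu')=\delta_{\nu\nu'}e(\nu)$, $\sum e(\nu)=1$, $x_kx_l=x_lx_k$, $x_ke(\nu)=e(\nu)x_k$, $\tau_\ell e(\nu)=e(s_\ell\nu)\tau_\ell$, $\tau_k\tau_\ell=\tau_\ell\tau_k$ ($|k-\ell|>1$); $\tau_k^2e(\nu)=(\partial_k\mathcal P_{\nu_k}(x_k,x_{k+1}))\tau_ke(\nu)$ if $\nu_k=\nu_{k+1}$, else $\mathcal Q_{\nu_k,\nu_{k+1}}(x_k,x_{k+1})e(\nu)$; $(\tau_kx_\ell-x_{s_k(\ell)}\tau_k)e(\nu)$ is $-\mathcal P_{\nu_k}(x_k,x_{k+1})e(\nu)$ if $\ell=k,\nu_k=\nu_{k+1}$, is $\mathcal P_{\nu_k}(x_k,x_{k+1})e(\nu)$ if $\ell=k+1,\nu_k=\nu_{k+1}$, and $0$ otherwise; $(\tau_{k+1}\tau_k\tau_{k+1}-\tau_k\tau_{k+1}\tau_k)e(\nu)$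 is $\mathcal P_{\nu_k}(x_k,x_{k+2})\overline{\mathcal Q}_{\nu_k,\nu_{k+1}}(x_k,x_{k+1},x_{k+2})e(\nu)$ if $\nu_k=\nu_{k+2}\ne\nu_{k+1}$, is $\overline{\mathcal P}'_{\nu_k}(x_k,x_{k+1},x_{k+2})\tau_ke(\nu)+\overline{\mathcal P}''_{\nu_k}(x_k,x_{k+1},x_{k+2})\tau_{k+1}e(\nu)$ if $\nu_k=\nu_{k+1}=\nu_{k+2}$, and $0$ otherwise; where $s_k=(k,k+1)$ acts on $I^n$ and on polynomials, $\partial_kf=(s_kf-f)/(x_k-x_{k+1})$, $\overline{\mathcal Q}_{i,j}(u,v,w)=\frac{\mathcal Q_{i,j}(u,v)-\mathcal Q_{i,j}(w,v)}{u-w}$, $\overline{\mathcal P}'_i(u,v,w)=\frac{\mathcal P_i(v,u)\mathcal P_i(u,w)}{(u-v)(u-w)}+\frac{\mathcal P_i(u,w)\mathcal P_i(v,w)}{(u-w)(v-w)}-\frac{\mathcal P_i(u,v)\mathcal P_i(v,w)}{(u-v)(v-w)}$, $\overline{\mathcal P}''_i(u,v,w)=-\frac{\mathcal P_i(u,v)\mathcal P_i(u,w)}{(u-v)(u-w)}-\frac{\mathcal P_i(u,w)\mathcal P_i(w,v)}{(u-w)(v-w)}+\frac{\mathcal P_i(u,v)\mathcal P_i(v,w)}{(u-v)(v-w)}$. *)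

From HB Require Import structures.
From mathcomp Require Import all_boot all_order all_algebra.
From mathcomp Require Import all_fingroup.
From mathcomp Require Export mpoly.
From Stdlib Require Import ClassicalEpsilon.

Set Implicit Arguments.
Unset Strict Implicit.
Unset Printing Implicit Defensive.

Import Order.TTheory GRing.Theory Num.Theory.
Local Open Scope ring_scope.

(* (alpha_i | alpha_j) := d_i * a_ij.                                   *)

Definition rform (I : finType) (A : I -> I -> int) (d : I -> nat) (i j : I) : int :=
  (d i)%:Z * A i j.

Record cartan_datum (I : finType) (A : I -> I -> int) (d : I -> nat) : Prop := {
  cd_diag : forall i, A i i = 2 \/ (A i i <= 0 /\ (2 %| A i i)%Z);
  cd_offdiag : forall i j, i != j -> A i j <= 0;
  cd_zero : forall i j, (A i j == 0) = (A j i == 0);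
  cd_dpos : forall i, (0 < d i)%N;
  cd_sym : forall i j, rform A d i j = rform A d j i
}.

(* Graded commutative ring k = (+)_{m >= 0} k_m, the pieces being given *)
(* by the predicates kdeg m.                                             *)

Record graded_ring (k : comNzRingType) (kdeg : nat -> pred k) : Prop := {
  gr_zero : forall m, kdeg m 0;
  gr_add : forall m a b, kdeg m a -> kdeg m b -> kdeg m (a + b);
  gr_opp : forall m a, kdeg m a -> kdeg m (- a);
  gr_one : kdeg 0 1;
  gr_mul : forall m1 m2 a b, kdeg m1 a -> kdeg m2 b -> kdeg (m1 + m2) (a * b);
  gr_span : forall c : k, exists (N : nat) (c_ : nat -> k),
      (forall m, kdeg m (c_ m)) /\ c = \sum_(m < N) c_ m;
  gr_direct : forall (N : nat) (c_ : nat -> k),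
      (forall m, kdeg m (c_ m)) -> \sum_(m < N) c_ m = 0 ->
      forall m, (m < N)%N -> c_ m = 0
}.

Definition Pbound (I : finType) (A : I -> I -> int) (i : I) : nat :=
  absz (1 - (A i i %/ 2)%Z).

Definition Qbound (I : finType) (A : I -> I -> int) (d : I -> nat) (i j : I) : nat :=
  absz (- rform A d i j).

Definition Qpol (I : finType) (A : I -> I -> int) (d : I -> nat)
  (k : comNzRingType) (t : I -> I -> nat -> nat -> k) (S : comAlgType k)
  (i j : I) (y z : S) : S :=
  if i == j then 0 else
  \sum_(p < (Qbound A d i j).+1) \sum_(q < (Qbound A d i j).+1
        | (d i * p + d j * q <= Qbound A d i j)%N)
     t i j p q *: (y ^+ p * z ^+ q).

Definition Ppol (I : finType) (A : I -> I -> int)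
  (k : comNzRingType) (w : I -> nat -> nat -> k) (S : comAlgType k)
  (i : I) (y z : S) : S :=
  \sum_(p < (Pbound A i).+1) \sum_(q < (Pbound A i).+1 | (p + q <= Pbound A i)%N)
     w i p q *: (y ^+ p * z ^+ q).

Definition kunit (k : comNzRingType) (c : k) : Prop := exists c' : k, c * c' = 1.

Record QP_datum (I : finType) (A : I -> I -> int) (d : I -> nat)
  (k : comNzRingType) (kdeg : nat -> pred k)
  (t : I -> I -> nat -> nat -> k) (w : I -> nat -> nat -> k) : Prop := {
  qp_t_lead : forall i j, i != j ->
      kdeg 0 (t i j (absz (- A i j)) 0%N) /\ kunit (t i j (absz (- A i j)) 0%N);
  qp_t_deg : forall i j p q, i != j ->
      ((d i)%:Z * p%:Z + (d j)%:Z * q%:Z <= - rform A d i j) ->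
      kdeg (absz ((-2)%R * (rform A d i j + (d i)%:Z * p%:Z + (d j)%:Z * q%:Z))) (t i j p q);
  qp_t_sym : forall i j p q, i != j ->
      ((d i)%:Z * p%:Z + (d j)%:Z * q%:Z <= - rform A d i j) ->
      t i j p q = t j i q p;
  qp_w_lead : forall i,
      kdeg 0 (w i (Pbound A i) 0%N) /\ kunit (w i (Pbound A i) 0%N) /\
      kdeg 0 (w i 0%N (Pbound A i)) /\ kunit (w i 0%N (Pbound A i));
  qp_w_deg : forall i p q, (p + q <= Pbound A i)%N ->
      kdeg (2 * d i * (Pbound A i - (p + q)))%N (w i p q)
}.

(* Exact division in k[x_1..x_n]: the polynomial g with N = D * g        *)
(* (used only where the paper asserts the quotient is a polynomial).    *)

Definition exdiv (k : comNzRingType) (n : nat) (D N : {mpoly k[n]}) : {mpoly k[n]} :=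
  match excluded_middle_informative (exists g, N = D * g) with
  | left H => proj1_sig (constructive_indefinite_description _ H)
  | right _ => 0
  end.

Definition sswap (k : comNzRingType) (n : nat) (a b : 'I_n) (f : {mpoly k[n]}) :=
  msym (tperm a b) f.

Definition ddiff (k : comNzRingType) (n : nat) (a b : 'I_n) (f : {mpoly k[n]}) :=
  exdiv ('X_a - 'X_b) (sswap a b f - f).

Definition Qbar (I : finType) (A : I -> I -> int) (d : I -> nat)
  (k : comNzRingType) (t : I -> I -> nat -> nat -> k) (n : nat)
  (i j : I) (a b c : 'I_n) : {mpoly k[n]} :=
  exdiv ('X_a - 'X_c)
    (Qpol A d t i j 'X_a 'X_b - Qpol A d t i j 'X_c 'X_b).

(* \bar P'_i(u,v,w) and \bar P''_i(u,v,w) at u = x_a, v = x_b, w = x_c,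
   obtained by clearing the common denominator (u-v)(u-w)(v-w). *)
Definition Pbar1 (I : finType) (A : I -> I -> int)
  (k : comNzRingType) (w : I -> nat -> nat -> k) (n : nat)
  (i : I) (a b c : 'I_n) : {mpoly k[n]} :=
  let P := Ppol A w i in
  let u := 'X_a in let v := 'X_b in let z := 'X_c in
  exdiv ((u - v) * (u - z) * (v - z))
    (P v u * P u z * (v - z) + P u z * P v z * (u - v) - P u v * P v z * (u - z)).

Definition Pbar2 (I : finType) (A : I -> I -> int)
  (k : comNzRingType) (w : I -> nat -> nat -> k) (n : nat)
  (i : I) (a b c : 'I_n) : {mpoly k[n]} :=
  let P := Ppol A w i in
  let u := 'X_a in let v := 'X_b in let z := 'X_c in
  exdiv ((u - v) * (u - z) * (v - z))
    (- (P u v * P u z * (v - z)) - P u z * P z v * (u - v) + P u v * P v z * (u - z)).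

(* Modules over R(n): a k-module M with k-linear operators e(nu), x_j,   *)
(* tau_k satisfying the defining relations of R(n).                      *)
(* tau is indexed by the left position k : 'I_n; only tau_k with         *)
(* k+1 < n (i.e. tau_1..tau_{n-1}) are generators of R(n).               *)

Section Action.
Variables (k : comNzRingType) (n : nat) (M : lmodType k).
Variable x : 'I_n -> M -> M.

Definition xmono (mm : 'X_{1..n}) (v : M) : M :=
  foldr (fun j u => iter (mm j) (x j) u) v (enum 'I_n).

Definition actp (f : {mpoly k[n]}) (v : M) : M :=
  \sum_(mm <- msupp f) f@_mm *: xmono mm v.
End Action.

Definition klinear (k : comNzRingType) (M : lmodType k) (g : M -> M) : Prop :=
  forall (c : k) (u v : M), g (c *: u + v) = c *: g u + g v.

Definition consec (n : nat) (a b : 'I_n) : bool := (val b == (val a).+1)%N.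

Definition swapseq (I : finType) (n : nat) (a b : 'I_n) (nu : {ffun 'I_n -> I})
  : {ffun 'I_n -> I} := [ffun j => nu (tperm a b j)].

Record is_Rmodule (I : finType) (A : I -> I -> int) (d : I -> nat)
  (k : comNzRingType) (t : I -> I -> nat -> nat -> k) (w : I -> nat -> nat -> k)
  (n : nat) (M : lmodType k)
  (e : {ffun 'I_n -> I} -> M -> M) (x : 'I_n -> M -> M) (tau : 'I_n -> M -> M)
  : Prop := {
  rm_lin_e : forall nu, klinear (e nu);
  rm_lin_x : forall j, klinear (x j);
  rm_lin_tau : forall j, klinear (tau j);
  rm_ee : forall nu nu' m, e nu (e nu' m) = if nu == nu' then e nu m else 0;
  rm_esum : forall m, \sum_(nu : {ffun 'I_n -> I}) e nu m = m;
  rm_xx : forall j l m, x j (x l m) = x l (x j m);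
  rm_xe : forall j nu m, x j (e nu m) = e nu (x j m);
  rm_taue : forall a b nu m, consec a b ->
      tau a (e nu m) = e (swapseq a b nu) (tau a m);
  rm_tautau_far : forall a b a' b' m, consec a b -> consec a' b' ->
      (1 < absz ((val a)%:Z - (val a')%:Z))%N ->
      tau a (tau a' m) = tau a' (tau a m);
  rm_tau2 : forall a b nu m, consec a b ->
      tau a (tau a (e nu m)) =
      if nu a == nu b then
        actp x (ddiff a b (Ppol A w (nu a) 'X_a 'X_b)) (tau a (e nu m))
      else actp x (Qpol A d t (nu a) (nu b) 'X_a 'X_b) (e nu m);
  rm_taux : forall a b j nu m, consec a b ->
      tau a (x j (e nu m)) - x (tperm a b j) (tau a (e nu m)) =
      if (nu a == nu b) && (j == a) then - actp x (Ppol A w (nu a) 'X_a 'X_b) (e nu m)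
      else if (nu a == nu b) && (j == b) then actp x (Ppol A w (nu a) 'X_a 'X_b) (e nu m)
      else 0;
  rm_braid : forall a b c nu m, consec a b -> consec b c ->
      tau b (tau a (tau b (e nu m))) - tau a (tau b (tau a (e nu m))) =
      if (nu a == nu c) && (nu a != nu b) then
        actp x (Ppol A w (nu a) 'X_a 'X_c * Qbar A d t (nu a) (nu b) a b c) (e nu m)
      else if (nu a == nu b) && (nu b == nu c) then
        actp x (Pbar1 A w (nu a) a b c) (tau a (e nu m)) +
        actp x (Pbar2 A w (nu a) a b c) (tau b (e nu m))
      else 0
}.

(* Fix nu with nu_a = nu_(a+1) and write T = tau_a, P = P_(nu_a)(x_a, x_(a+1)),
   P' = P_(nu_a)(x_(a+1), x_a) and ∂ = ∂_a.  Induction on polynomials turns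
   the relations of R(n) into the twisted Leibniz rule
     T g = (s_a g) T + P (∂ g)      on e(nu)M.
   Let f kill e(nu)M and g = ∂ f.  Then (s_a f) T = - P g on e(nu)M, and g,
   being s_a-symmetric, commutes with T; hence (x_a - x_(a+1)) T g = - P g.
   Feeding T e(nu)M into the same identity and using T^2 = (∂ P) T gives
   P T g = (∂ P) P g.  Multiplying the previous identity by P therefore yields
   - P P g = (x_a - x_(a+1)) (∂ P) P g = (P' - P) P g, i.e. P' P g = 0; the
   second claim follows from s_a f = f + (x_a - x_(a+1)) g. *)
From HB Require Import structures.
From mathcomp Require Import all_boot all_order all_algebra all_fingroup.
From mathcomp Require Import mpoly ssrcomplements.
From Stdlib Require Import ClassicalEpsilon.
From mathcomp Require Import ring.
Import GRing.Theory.
Local Open Scope ring_scope.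
Set Implicit Arguments.
Unset Strict Implicit.

Section KLinear.
Variables (k : comNzRingType) (M : lmodType k).
Implicit Types (g h : M -> M) (u v : M).

Lemma klinear0 g : klinear g -> g 0 = 0.
Proof.
move=> lin_g; have := lin_g 1 0 0; rewrite addr0 !scale1r => g0.
by apply/(addrI (g 0)); rewrite addr0 -g0.
Qed.

Lemma klinearD g : klinear g -> forall u v, g (u + v) = g u + g v.
Proof. by move=> lin_g u v; have := lin_g 1 u v; rewrite !scale1r. Qed.

Lemma klinearZ g : klinear g -> forall c u, g (c *: u) = c *: g u.
Proof. by move=> lin_g c u; have := lin_g c u 0; rewrite addr0 klinear0 ?addr0. Qed.

Lemma klinearN g : klinear g -> forall u, g (- u) = - g u.
Proof. by move=> lin_g u; rewrite -scaleN1r klinearZ // scaleN1r. Qed.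

Lemma klinear_sum g (T : Type) (r : seq T) (F : T -> M) : klinear g ->
  g (\sum_(i <- r) F i) = \sum_(i <- r) g (F i).
Proof.
move=> lin_g; elim/big_rec2: _ => [|i y1 y2 _ <-]; first exact: klinear0.
exact: klinearD.
Qed.

Lemma klinear_comp g h : klinear g -> klinear h -> klinear (fun v => g (h v)).
Proof. by move=> lin_g lin_h c u v; rewrite lin_h lin_g. Qed.

Lemma klinear_iter g m : klinear g -> klinear (iter m g).
Proof. by move=> lin_g; elim: m => [|m IH] // c u v; rewrite !iterS IH lin_g. Qed.

Lemma iter_comm g h m : (forall v, g (h v) = h (g v)) ->
  forall v, g (iter m h v) = iter m h (g v).
Proof. by move=> gh; elim: m => [|m IH] v //; rewrite !iterS gh IH. Qed.

End KLinear.

Section PolynomialAction.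
Variables (k : comNzRingType) (M : lmodType k) (n : nat).
Variable x : 'I_n -> M -> M.
Hypothesis lin_x : forall j, klinear (x j).
Hypothesis x_comm : forall j l v, x j (x l v) = x l (x j v).
Implicit Types (f g : {mpoly k[n]}) (v : M).

Definition xmono_seq (l : seq 'I_n) (mm : 'X_{1..n}) v : M :=
  foldr (fun j u => iter (mm j) (x j) u) v l.

Lemma klinear_xmono_seq l mm : klinear (xmono_seq l mm).
Proof.
elim: l => [|j l IH] //=.
exact: (klinear_comp (klinear_iter _ (lin_x j)) IH).
Qed.

Lemma xmono_seq_comm (h : M -> M) l mm : (forall j v, h (x j v) = x j (h v)) ->
  forall v, h (xmono_seq l mm v) = xmono_seq l mm (h v).
Proof. by move=> hx; elim: l => [|j l IH] v //=; rewrite (iter_comm _ (hx j)) IH. Qed.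

Lemma xmono_seqD l m1 m2 v :
  xmono_seq l (m1 + m2) v = xmono_seq l m1 (xmono_seq l m2 v).
Proof.
elim: l => [|j l IH] //=; rewrite mnmDE iterD IH; congr (iter _ _ _).
by apply: xmono_seq_comm => i u; apply/esym/iter_comm => w; apply: x_comm.
Qed.

Lemma xmono_seqU l j v : uniq l ->
  xmono_seq l U_(j)%MM v = if j \in l then x j v else v.
Proof.
elim: l => [|i l IH] //= /andP [il ul]; rewrite IH // mnm1E in_cons.
by have [->|_] := eqVneq j i; [rewrite (negbTE il) | case: (i \in l)].
Qed.

Lemma xmono0 v : xmono x 0%MM v = v.
Proof. by rewrite /xmono; elim: (enum 'I_n) => [|j l IH] //=; rewrite mnm0E. Qed.

Lemma xmonoU j v : xmono x U_(j)%MM v = x j v.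
Proof. by rewrite [LHS]xmono_seqU ?enum_uniq // mem_enum. Qed.

Lemma xmonoD m1 m2 v : xmono x (m1 + m2) v = xmono x m1 (xmono x m2 v).
Proof. exact: xmono_seqD. Qed.

Lemma klinear_xmono mm : klinear (xmono x mm).
Proof. exact: klinear_xmono_seq. Qed.

Lemma actpE f i v : (msize f <= i)%N ->
  actp x f v = \sum_(mm : 'X_{1..n < i}) f@_mm *: xmono x mm v.
Proof.
move=> le_fi; rewrite /actp (big_mksub 'X_{1..n < i}) ?msupp_uniq //=; last first.
  by move=> mm /msize_mdeg_lt /leq_trans; apply.
by rewrite big_rmcond //= => mm /memN_msupp_eq0 ->; rewrite scale0r.
Qed.

Lemma actp0 v : actp x 0 v = 0.
Proof. by rewrite /actp msupp0 big_nil. Qed.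

Lemma actpD f g v : actp x (f + g) v = actp x f v + actp x g v.
Proof.
pose i := maxn (msize (f + g)) (maxn (msize f) (msize g)).
have le_f : (msize f <= i)%N by rewrite 2!leq_max leqnn !orbT.
have le_g : (msize g <= i)%N by rewrite 2!leq_max leqnn !orbT.
rewrite !(@actpE _ i) ?leq_maxl // -big_split.
by apply: eq_bigr => mm _; rewrite mcoeffD scalerDl.
Qed.

Lemma actpZ c f v : actp x (c *: f) v = c *: actp x f v.
Proof.
rewrite !(@actpE _ (maxn (msize (c *: f)) (msize f))) ?leq_maxl ?leq_maxr //.
by rewrite scaler_sumr; apply: eq_bigr => mm _; rewrite mcoeffZ scalerA.
Qed.

Lemma actpN f v : actp x (- f) v = - actp x f v.
Proof. by rewrite -[- f]scaleN1r actpZ scaleN1r. Qed.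

Lemma actpB f g v : actp x (f - g) v = actp x f v - actp x g v.
Proof. by rewrite actpD actpN. Qed.

Lemma actp_sum (T : Type) (r : seq T) (F : T -> {mpoly k[n]}) v :
  actp x (\sum_(i <- r) F i) v = \sum_(i <- r) actp x (F i) v.
Proof. by elim/big_rec2: _ => [|i y1 y2 _ <-]; rewrite ?actp0 ?actpD. Qed.

Lemma actpXm mm v : actp x 'X_[mm] v = xmono x mm v.
Proof. by rewrite /actp msuppX big_seq1 mcoeffX eqxx scale1r. Qed.

Lemma actpX j v : actp x 'X_j v = x j v.
Proof. by rewrite actpXm xmonoU. Qed.

Lemma actp1 v : actp x 1 v = v.
Proof. by rewrite -mpolyX0 actpXm xmono0. Qed.

Lemma klinear_actp f : klinear (actp x f).
Proof.
move=> c u v; rewrite /actp scaler_sumr -big_split; apply: eq_bigr => mm _.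
by rewrite klinear_xmono scalerDr !scalerA mulrC.
Qed.

Lemma actp_comm (h : M -> M) f : klinear h -> (forall j v, h (x j v) = x j (h v)) ->
  forall v, h (actp x f v) = actp x f (h v).
Proof.
move=> lin_h hx v; rewrite /actp klinear_sum //; apply: eq_bigr => mm _.
by rewrite klinearZ //; congr (_ *: _); exact: xmono_seq_comm.
Qed.

Lemma actpM f g v : actp x (f * g) v = actp x f (actp x g v).
Proof.
pose i := maxn (msize f) (msize g).
rewrite (@mpolywME _ _ f g i) ?leq_maxl ?leq_maxr // actp_sum.
rewrite (@actpE g i) ?leq_maxr // (@actpE f i) ?leq_maxl //.
transitivity (\sum_(m1 : 'X_{1..n < i}) \sum_(m2 : 'X_{1..n < i})
    f@_m1 *: (g@_m2 *: xmono x m1 (xmono x m2 v))).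
  rewrite pair_bigA; apply: eq_bigr => -[m1 m2] _ /=.
  by rewrite actpZ actpXm xmonoD scalerA.
apply: eq_bigr => m1 _; rewrite (klinear_sum _ _ (klinear_xmono _)) scaler_sumr.
by apply: eq_bigr => m2 _; rewrite (klinearZ (klinear_xmono _)).
Qed.

Lemma actpAC f g v : actp x f (actp x g v) = actp x g (actp x f v).
Proof. by rewrite -!actpM mulrC. Qed.

End PolynomialAction.

Lemma lreg_XB (R : nzRingType) n (a b : 'I_n) : a != b ->
  GRing.lreg ('X_a - 'X_b : {mpoly R[n]}).
Proof.
move=> ab; apply: lreg_mleadc.
have Uab : U_(a)%MM != U_(b)%MM.
  apply/eqP => /(congr1 (fun m : 'X_{1..n} => m a)).
  by rewrite !mnm1E eqxx eq_sym (negbTE ab).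
have [lt|lt|Eab] := Order.TotalTheory.ltgtP U_(a)%MM U_(b)%MM.
- rewrite mleadDr ?mleadN ?mleadXm // mcoeffB !mcoeffX eqxx (negbTE Uab) sub0r.
  exact/lregN/lreg1.
- rewrite mleadDl ?mleadN ?mleadXm // mcoeffB !mcoeffX eqxx eq_sym (negbTE Uab).
  by rewrite subr0; exact/lreg1.
- by rewrite Eab eqxx in Uab.
Qed.

Lemma exdiv_mul (R : comNzRingType) n (D g : {mpoly R[n]}) :
  GRing.lreg D -> exdiv D (D * g) = g.
Proof.
move=> regD; rewrite /exdiv.
case: excluded_middle_informative => [ex|[]]; last by exists g.
by case: (constructive_indefinite_description _ ex) => g' /= /regD.
Qed.

Lemma msym_X (R : nzRingType) n (s : 'S_n) j :
  msym s ('X_j : {mpoly R[n]}) = 'X_(s j).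
Proof. by rewrite /msym mmapX mmap1U. Qed.

Section Swap.
Variables (k : comNzRingType) (n : nat) (a b : 'I_n).
Local Notation s := (sswap a b).
Implicit Types (f g : {mpoly k[n]}).

Lemma sswapK g : s (s g) = g.
Proof. by rewrite /sswap -msymMm tperm2 msym1m. Qed.

Lemma sswapM f g : s (f * g) = s f * s g.
Proof. exact: msymM. Qed.

Lemma sswapB f g : s (f - g) = s f - s g.
Proof. exact: msymB. Qed.

Lemma sswapD f g : s (f + g) = s f + s g.
Proof. exact: msymD. Qed.

Lemma sswapZ c f : s (c *: f) = c *: s f.
Proof. exact: msymZ. Qed.

Lemma sswap1 : s (1 : {mpoly k[n]}) = 1.
Proof. exact: msym1. Qed.

Lemma sswapX j : s ('X_j : {mpoly k[n]}) = 'X_(tperm a b j).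
Proof. exact: msym_X. Qed.

Lemma sswap_XB : s ('X_a - 'X_b : {mpoly k[n]}) = - ('X_a - 'X_b).
Proof. by rewrite sswapB !sswapX tpermL tpermR opprB. Qed.

Lemma sswap_Ppol (I : finType) (A : I -> I -> int) (w : I -> nat -> nat -> k) i :
  s (Ppol A w i 'X_a 'X_b) = Ppol A w i 'X_b 'X_a.
Proof.
rewrite /sswap /Ppol !raddf_sum; apply: eq_bigr => p _; rewrite raddf_sum.
apply: eq_bigr => q _; rewrite /= msymZ rmorphM !rmorphXn /= !msym_X.
by rewrite tpermL tpermR.
Qed.

End Swap.

Section TwistedLeibniz.
Variables (I : finType) (A : I -> I -> int) (d : I -> nat)
  (k : comNzRingType) (t : I -> I -> nat -> nat -> k) (w : I -> nat -> nat -> k)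
  (n : nat) (M : lmodType k) (e : {ffun 'I_n -> I} -> M -> M) (x : 'I_n -> M -> M)
  (tau : 'I_n -> M -> M).
Hypothesis HM : is_Rmodule A d t w e x tau.
Variables (nu : {ffun 'I_n -> I}) (a b : 'I_n).
Hypothesis Hab : consec a b.
Hypothesis Hnu : nu a = nu b.

Local Notation P := (Ppol A w (nu a) 'X_a 'X_b : {mpoly k[n]}).
Local Notation P' := (Ppol A w (nu a) 'X_b 'X_a : {mpoly k[n]}).
Local Notation s := (sswap a b).
Local Notation T := (tau a).
Local Notation act := (actp x).
Implicit Types (f g : {mpoly k[n]}) (m : M).

Let lin_x := rm_lin_x HM.
Let x_comm := rm_xx HM.
Let lin_T : klinear T := rm_lin_tau HM a.
Let lin_act f : klinear (act f) := klinear_actp lin_x f.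

Lemma consec_neq : a != b.
Proof. by apply: contraTneq Hab => ->; rewrite /consec eqn_leq ltnn andbF. Qed.

Let actM f g v : act (f * g) v = act f (act g v) := actpM lin_x x_comm f g v.

Lemma actp_e f m : act f (e nu m) = e nu (act f m).
Proof. by apply/esym/(actp_comm _ (rm_lin_e HM nu)) => j v; rewrite (rm_xe HM). Qed.

Lemma tau_e m : T (e nu m) = e nu (T m).
Proof.
rewrite (rm_taue HM _ _ Hab); congr (e _ _).
by apply/ffunP => j; rewrite ffunE; case: tpermP => // ->.
Qed.

Lemma tau2_e m : T (T (e nu m)) = act (ddiff a b P) (T (e nu m)).
Proof. by rewrite (rm_tau2 HM _ _ Hab) Hnu eqxx. Qed.

Definition tau_leibniz (g : {mpoly k[n]}) : Prop :=
  exists h, s g - g = ('X_a - 'X_b) * h /\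
    forall m, T (act g (e nu m)) = act (s g) (T (e nu m)) + act (P * h) (e nu m).

Lemma tau_leibniz1 : tau_leibniz 1.
Proof.
by exists 0; rewrite sswap1 subrr !mulr0; split=> // m; rewrite !actp1 actp0 addr0.
Qed.

Lemma tau_leibnizX j : tau_leibniz 'X_j.
Proof.
exists (if j == a then -1 else if j == b then 1 else 0); rewrite sswapX.
split=> [|m].
  have [->|ja] := eqVneq j a; first by rewrite tpermL; ring.
  have [->|jb] := eqVneq j b; first by rewrite tpermR; ring.
  by rewrite tpermD 1?eq_sym // subrr mulr0.
apply/eqP; rewrite addrC -subr_eq !actpX (rm_taux HM _ _ _ Hab) Hnu eqxx /=.
have [_|_] := eqVneq j a; first by rewrite mulrN1 actpN.
by have [_|_] := eqVneq j b; rewrite ?mulr1 ?mulr0 ?actp0.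
Qed.

Lemma tau_leibnizD f g : tau_leibniz f -> tau_leibniz g -> tau_leibniz (f + g).
Proof.
move=> [h1 [E1 T1]] [h2 [E2 T2]]; exists (h1 + h2); rewrite sswapD.
split=> [|m]; first by rewrite mulrDr -E1 -E2 opprD addrACA.
by rewrite !actpD (klinearD lin_T) T1 T2 mulrDr actpD addrACA.
Qed.

Lemma tau_leibnizZ c f : tau_leibniz f -> tau_leibniz (c *: f).
Proof.
move=> [h [E Th]]; exists (c *: h); rewrite sswapZ.
split=> [|m]; first by rewrite -scalerBr E scalerAr.
by rewrite !actpZ (klinearZ lin_T) Th -scalerAr actpZ scalerDr.
Qed.

Lemma tau_leibnizM f g : tau_leibniz f -> tau_leibniz g -> tau_leibniz (f * g).
Proof.
move=> [h1 [E1 T1]] [h2 [E2 T2]]; exists (s f * h2 + h1 * g).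
rewrite sswapM; split=> [|m]; first by rewrite mulrDr mulrCA -E2 mulrA -E1; ring.
rewrite !actM actp_e T1 -actp_e T2 (klinearD (lin_act _)) -!actM.
by rewrite -addrA mulrDr actpD mulrCA -mulrA.
Qed.

Lemma tau_leibniz_all g : tau_leibniz g.
Proof.
rewrite [g]mpolyE; apply: big_ind => [|f1 f2|mm _].
- by have := tau_leibnizZ 0 tau_leibniz1; rewrite scale0r.
- exact: tau_leibnizD.
apply: tau_leibnizZ; rewrite mpolyXE_id; apply: big_ind => [|f1 f2|i _].
- exact: tau_leibniz1.
- exact: tau_leibnizM.
elim: (mm i) => [|c IH]; first exact: tau_leibniz1.
by rewrite exprS; apply: tau_leibnizM => //; exact: tau_leibnizX.
Qed.

Lemma XB_ddiff g : ('X_a - 'X_b) * ddiff a b g = s g - g.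
Proof.
have [h [E _]] := tau_leibniz_all g.
by rewrite /ddiff E exdiv_mul //; exact: lreg_XB consec_neq.
Qed.

Lemma tau_actp g m :
  T (act g (e nu m)) = act (s g) (T (e nu m)) + act (P * ddiff a b g) (e nu m).
Proof.
have [h [E Th]] := tau_leibniz_all g.
by rewrite /ddiff E exdiv_mul //; exact: lreg_XB consec_neq.
Qed.

Section Annihilator.
Variable f : {mpoly k[n]}.
Hypothesis f_kills : forall m, act f (e nu m) = 0.

Local Notation g := (ddiff a b f).

Lemma sswap_ddiff : s g = g.
Proof.
apply: (lreg_XB consec_neq); rewrite XB_ddiff.
have := congr1 s (XB_ddiff f); rewrite sswapM sswap_XB sswapB sswapK => E.
by rewrite -[s f - f]opprB -E mulNr opprK.
Qed.

Lemma tau_ddiff m : T (act g (e nu m)) = act g (T (e nu m)).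
Proof.
have dg0 : ddiff a b g = 0.
  by apply: (lreg_XB consec_neq); rewrite XB_ddiff sswap_ddiff subrr mulr0.
by rewrite tau_actp sswap_ddiff dg0 mulr0 actp0 addr0.
Qed.

Lemma sswap_tau m : act (s f) (T (e nu m)) = - act (P * g) (e nu m).
Proof. by apply/eqP; rewrite -addr_eq0 -tau_actp f_kills (klinear0 lin_T). Qed.

Lemma XB_tau_ddiff m :
  act ('X_a - 'X_b) (T (act g (e nu m))) = - act P (act g (e nu m)).
Proof.
rewrite tau_ddiff -actM XB_ddiff actpB tau_e f_kills subr0.
by rewrite -tau_e sswap_tau actM.
Qed.

Lemma Ppol_tau_ddiff m :
  act P (T (act g (e nu m))) = act (ddiff a b P) (act P (act g (e nu m))).
Proof.
have := sswap_tau (T m); rewrite -tau_e tau2_e actpAC // sswap_tau.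
rewrite (klinearN (lin_act _)) tau_ddiff -!actM => E.
by rewrite -mulrA; apply: oppr_inj; rewrite E.
Qed.

Lemma Ppol_swap_Ppol_ddiff m : act (P' * (P * g)) (e nu m) = 0.
Proof.
have := congr1 (act P) (XB_tau_ddiff m).
rewrite actpAC // Ppol_tau_ddiff -actM XB_ddiff sswap_Ppol actpB (klinearN (lin_act P)).
by move/eqP; rewrite subr_eq addNr !actM => /eqP.
Qed.

Lemma ddiff_Ppol_Ppol_kills m : act (g * P * P') (e nu m) = 0.
Proof. by rewrite mulrC (mulrC g) Ppol_swap_Ppol_ddiff. Qed.

Lemma sswap_Ppol_Ppol_kills m : act (s f * P * P') (e nu m) = 0.
Proof.
have -> : s f = f + ('X_a - 'X_b) * g by rewrite XB_ddiff addrC subrK.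
rewrite 2!mulrDl actpD -mulrA (mulrC f) (actM (P * P')) f_kills.
rewrite (klinear0 (lin_act _)) add0r.
by rewrite -!mulrA actM !mulrA ddiff_Ppol_Ppol_kills (klinear0 (lin_act _)).
Qed.

End Annihilator.
End TwistedLeibniz.

Theorem lemma4p2
  (I : finType) (A : I -> I -> int) (d : I -> nat)
  (k : comNzRingType) (kdeg : nat -> pred k)
  (t : I -> I -> nat -> nat -> k) (w : I -> nat -> nat -> k)
  (HA : cartan_datum A d) (Hk : graded_ring kdeg) (HQP : QP_datum A d kdeg t w)
  (n : nat) (Hn : (2 <= n)%N)
  (M : lmodType k) (e : {ffun 'I_n -> I} -> M -> M) (x : 'I_n -> M -> M)
  (tau : 'I_n -> M -> M) (HM : is_Rmodule A d t w e x tau)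
  (nu : {ffun 'I_n -> I}) (a b : 'I_n) (Hab : consec a b) (Hnu : nu a = nu b)
  (f : {mpoly k[n]}) (Hf : forall m : M, actp x f (e nu m) = 0) :
  (forall m : M,
     actp x (ddiff a b f * Ppol A w (nu a) 'X_a 'X_b * Ppol A w (nu a) 'X_b 'X_a)
       (e nu m) = 0) /\
  (forall m : M,
     actp x (sswap a b f * Ppol A w (nu a) 'X_a 'X_b * Ppol A w (nu a) 'X_b 'X_a)
       (e nu m) = 0).
Proof.
split; first exact: (ddiff_Ppol_Ppol_kills HM Hab Hnu Hf).
exact: (sswap_Ppol_Ppol_kills HM Hab Hnu Hf).
Qed.
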